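(* Let $G_o=(V,E)$ be an oriented graph with $|V|=n$ and induced partial order $P$ on $V$. Define $g:\hat E\to\mathbb{R}_{\ge0}$ by: for $(u,v)\in E$, $g(u,v)$ is the number of linear extensions $\sigma$ of $P$ with $\sigma(u)=\sigma(v)-1$; for $v\in V$ with out-degree $0$ in $G_o$, $g(v,\hat1)$ is the number of linear extensions $\sigma$ of $P$ with $\sigma(v)=n$; for $v\in V$ with in-degree $0$ in $G_o$, $g(\hat0,v)$ is the number of linear extensions $\sigma$ of $P$ with $\sigma(v)=1$. Then $g$ is a natural flow on $G_o$, and the net $g$-flow from $\hat0$ to $\hat1$ equals $e(P)$, the number of linear extensions of $P$.
   Context: An oriented graph $G_o=(V,E)$ is a simple connected undirected graph together with an acyclic orientation of its edges, regarded as a directed graph (each member of $E$ is an ordered pair). Its induced partial order is: $u<v$ iff there is a directed path from $u$ to $v$. $\hat G_o$ is the directed graph on vertex set $V\cup\{\hat0,\hat1\}$ whose directed edge set $\hat E$ is $E$ together with all edges $(v,\hat1)$ for $v\in V$ of out-degree $0$ in $G_o$ and all edges $(\hat0,v)$ for $v\in V$ of in-degree $0$ in $G_o$. A natural flow on $G_o$ is a function $f:\hat E\to\mathbb{R}_{\ge0}$ such that for every $v\in V$, $\sum_{(x,v)\in\hat E}f(x,v)=\sum_{(v,y)\in\hat E}f(v,y)$ (a nonnegative network flow on $\hat G_o$ with source $\hat0$, sink $\hat1$ and infinite capacities). A linear extension of a partial order $P$ on an $n$-element set $V$ is a bijection $\sigma:V\to[n]$ such that $u<_P v$ implies $\sigma(u)<\sigma(v)$.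 *)

From HB Require Import structures.
From mathcomp Require Import all_boot all_order all_algebra.
Set Implicit Arguments. Unset Strict Implicit. Unset Printing Implicit Defensive.
Import Order.TTheory GRing.Theory Num.Theory.

Section Oriented.
Variable T : finType.

(* An oriented graph on vertex set T is given by its directed edge relation E.
   It is an acyclic orientation of a simple connected (nonempty) undirected graph. *)
Definition oriented_graph (E : rel T) : Prop :=
  [/\ 0 < #|T|,
      (forall u, ~~ E u u),
      (forall u v, E u v -> ~~ E v u),
      (forall u v, E u v -> ~~ connect E v u)
    & (forall u v, connect (fun x y => E x y || E y x) u v)].

Definition pord (E : rel T) (u v : T) : bool :=
  [exists w, E u w && connect E w v].

Definition outdeg0 (E : rel T) (v : T) : bool := [forall w, ~~ E v w].
Definition indeg0 (E : rel T) (v : T) : bool := [forall w, ~~ E w v].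

(* A linear extension sigma : V -> [n] is encoded as s : T -> 'I_n with
   sigma(v) = s v + 1 (0-based positions). *)
Definition linext (E : rel T) (s : {ffun T -> 'I_#|T|}) : bool :=
  injectiveb s && [forall u, forall v, pord E u v ==> (s u < s v)%N].

Definition linexts (E : rel T) : {set {ffun T -> 'I_#|T|}} :=
  [set s | linext E s].

Definition num_linext (E : rel T) : nat := #|linexts E|.

End Oriented.

Inductive hatV (T : Type) := Bot | Top | Vx of T.
Arguments Bot {T}. Arguments Top {T}.

Definition hatV_to (T : Type) (x : hatV T) : option (option T) :=
  match x with Bot => None | Top => Some None | Vx v => Some (Some v) end.
Definition hatV_of (T : Type) (o : option (option T)) : hatV T :=
  match o with None => Bot | Some None => Top | Some (Some v) => Vx v end.
Lemma hatV_K (T : Type) : cancel (@hatV_to T) (@hatV_of T).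
Proof. by case. Qed.

HB.instance Definition _ (T : finType) := Finite.copy (hatV T) (can_type (@hatV_K T)).

Section Hat.
Variable T : finType.

Definition hatE (E : rel T) (x y : hatV T) : bool :=
  match x, y with
  | Vx u, Vx v => E u v
  | Vx v, Top => outdeg0 E v
  | Bot, Vx v => indeg0 E v
  | _, _ => false
  end.

Definition natural_flow (R : numDomainType) (E : rel T) (f : hatV T -> hatV T -> R) : Prop :=
  (forall x y, hatE E x y -> 0 <= f x y)%R /\
  (forall v : T, (\sum_(x | hatE E x (Vx v)) f x (Vx v) =
                  \sum_(y | hatE E (Vx v) y) f (Vx v) y)%R).

Definition net_flow (R : numDomainType) (E : rel T) (f : hatV T -> hatV T -> R) : R :=
  (\sum_(y | hatE E Bot y) f Bot y - \sum_(x | hatE E x Bot) f x Bot)%R.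

(* the function g of the lemma (only its values on \hat E matter) *)
Definition gflow (R : numDomainType) (E : rel T) (x y : hatV T) : R :=
  match x, y with
  | Vx u, Vx v => (#|[set s in linexts E | (s u).+1 == s v]|)%:R
  | Vx v, Top => (#|[set s in linexts E | (s v).+1 == #|T|]|)%:R
  | Bot, Vx v => (#|[set s in linexts E | nat_of_ord (s v) == 0%N]|)%:R
  | _, _ => 0%R
  end.

End Hat.

From HB Require Import structures.
From mathcomp Require Import all_boot all_order all_algebra all_fingroup zify.
Import Order.TTheory GRing.Theory Num.Theory.
Set Implicit Arguments. Unset Strict Implicit. Unset Printing Implicit Defensive.

(* In a linear extension [s], the vertex [v] gets one unit of inflow when it
   occupies the first slot or when the vertex in the slot just below it is an
   in-neighbour, and no inflow otherwise; symmetrically for outflow.  Two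
   vertices in consecutive slots that are comparable form an edge, so if the
   vertex just above [v] is not an out-neighbour it is incomparable to [v],
   and swapping the two slots gives a linear extension in which [v] receives
   no inflow.  This swap is a bijection between the extensions with no
   outflow at [v] and those with no inflow at [v]; as every contribution is
   0 or 1, the total inflow at [v] equals the total outflow.  The net flow
   out of [\hat0] is [e(P)] because each extension has exactly one vertex in
   its first slot, necessarily of in-degree 0. *)

Lemma big_hatV (R : Type) (idx : R) (op : Monoid.com_law idx) (T : finType)
    (F : hatV T -> R) :
  \big[op/idx]_(x : hatV T) F x =
    op (F Bot) (op (F Top) (\big[op/idx]_(u : T) F (Vx u))).
Proof.
rewrite (bigD1 Bot) // (bigD1 Top) //=; congr (op _ (op _ _)).
rewrite (reindex_omap (@Vx T) (fun x => if x is Vx u then Some u else None)).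
  by apply: eq_bigl => u; rewrite eqxx.
by case=> [||u].
Qed.

Lemma card_set_sum (I : finType) (A : {set I}) (P : pred I) :
  #|[set i in A | P i]| = \sum_(i in A) P i.
Proof. by rewrite -sum1dep_card big_mkcondr; apply: eq_bigr => i _; case: (P i). Qed.

Lemma sum_pred1_indicator (I : finType) (P Q : pred I) (i0 : I) :
  Q =1 pred1 i0 -> \sum_(i | P i) Q i = P i0.
Proof.
move=> Qi0; rewrite big_mkcond (bigD1 i0) //= Qi0 /= eqxx big1 ?addn0.
  by case: (P i0).
by move=> i /negbTE ni0; rewrite Qi0 /= ni0; case: (P i).
Qed.

Lemma sum_le1_card (I : finType) (A : {set I}) (F : I -> nat) :
  {in A, forall i, F i <= 1} -> \sum_(i in A) F i + #|[set i in A | F i == 0]| = #|A|.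
Proof.
move=> F_le1; rewrite card_set_sum -big_split -sum1_card /=.
by apply: eq_bigr => i /F_le1; case: (F i) => [|[|]].
Qed.

Lemma card_in_inverse (I : finType) (A B : {set I}) (f g : I -> I) :
    {in A, forall i, f i \in B} -> {in B, forall i, g i \in A} ->
    {in A, cancel f g} -> {in B, cancel g f} ->
  #|A| = #|B|.
Proof.
move=> fAB gBA fK gK; apply/eqP; rewrite eqn_leq; apply/andP; split.
  rewrite -(card_in_imset (can_in_inj fK)); apply/subset_leq_card/subsetP.
  by move=> _ /imsetP [i Ai ->]; apply: fAB.
rewrite -(card_in_imset (can_in_inj gK)); apply/subset_leq_card/subsetP.
by move=> _ /imsetP [i Bi ->]; apply: gBA.
Qed.

Lemma tperm_succ_lt n (a b i j : 'I_n) : val b = (val a).+1 -> i < j ->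
  ~~ ((val i == val a) && (val j == val b)) -> tperm a b i < tperm a b j.
Proof.
have val_neq (p q : 'I_n) : p <> q -> val p != val q by move=> pq; apply/eqP => /val_inj.
move=> ab ij nij.
case: tpermP => [/(congr1 val) h1|/(congr1 val) h1|/val_neq h1 /val_neq h2];
case: tpermP => [/(congr1 val) h3|/(congr1 val) h3|/val_neq h3 /val_neq h4];
move: ab ij nij h1 h3 {val_neq}; rewrite /=; try (move: h2 h4; rewrite /=); lia.
Qed.

Lemma val_insubd_succ n (i : 'I_n) : i.+1 < n -> val (insubd i i.+1) = i.+1.
Proof. by move=> lt_succ; rewrite val_insubd lt_succ. Qed.

Lemma val_insubd_pred n (i : 'I_n) : 0 < i -> val (insubd i i.-1) = i.-1.
Proof. by rewrite val_insubd (leq_ltn_trans (leq_pred _) (ltn_ord i)). Qed.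

Section LinearExtensions.
Variables (T : finType) (E : rel T).
Implicit Types (s : {ffun T -> 'I_#|T|}) (u v w x y : T).

Local Notation L := (linexts E).

Lemma edge_pord u v : E u v -> pord E u v.
Proof. by move=> Euv; apply/existsP; exists v; rewrite Euv connect0. Qed.

Lemma linext_inj s : s \in L -> injective s.
Proof. by rewrite inE => /andP [/injectiveP]. Qed.

Lemma linext_lt s x y : s \in L -> pord E x y -> s x < s y.
Proof. by rewrite inE => /andP [_ /forallP/(_ x)/forallP/(_ y)/implyP]. Qed.

Lemma linext_onto s : s \in L -> forall i, exists u, s u = i.
Proof.
move=> Ls i; have card_le : #|'I_#|T| | <= #|T| by rewrite card_ord.
by case/codomP: (inj_card_onto (linext_inj Ls) card_le i) => u ->; exists u.
Qed.

Lemma linext_succ_edge s x y : s \in L -> pord E x y -> (s x).+1 = s y -> E x y.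
Proof.
move=> Ls /existsP [z /andP [Exz /connectP [[|z' p] /= zp ->]]] // sxy.
case/andP: zp => Ezz' z'p.
have pzy : pord E z (last z' p) by apply/existsP; exists z'; rewrite Ezz'; apply/connectP; exists p.
have sxz := linext_lt Ls (edge_pord Exz).
by have := linext_lt Ls pzy; rewrite -sxy ltnS leqNgt sxz.
Qed.

Definition inflow v s : nat :=
  (s v == 0 :> nat) + \sum_(u | E u v) ((s u).+1 == s v).
Definition outflow v s : nat :=
  ((s v).+1 == #|T|) + \sum_(w | E v w) ((s v).+1 == s w).

Lemma inflow_le1 v s : s \in L -> inflow v s <= 1.
Proof.
move=> Ls; rewrite /inflow; case: eqP => [sv0|sv_neq0] /=.
  by rewrite big1 // => u _; rewrite sv0.
have lt_pred : (s v).-1 < #|T| by apply: leq_ltn_trans (leq_pred _) (ltn_ord _).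
have [u0 su0] := linext_onto Ls (Ordinal lt_pred).
rewrite (@sum_pred1_indicator _ _ _ u0); first by case: (E u0 v).
move=> u /=; apply/eqP/eqP => [su|->]; last by rewrite su0 /= prednK // lt0n; apply/eqP.
by apply: (linext_inj Ls); apply: val_inj; rewrite su0 /= -su.
Qed.

Lemma outflow_le1 v s : s \in L -> outflow v s <= 1.
Proof.
move=> Ls; rewrite /outflow; case: eqP => [sv_last|sv_nlast] /=.
  by rewrite big1 // => w _; rewrite sv_last eq_sym ltn_eqF.
have lt_succ : (s v).+1 < #|T| by have := ltn_ord (s v); lia.
have [w0 sw0] := linext_onto Ls (Ordinal lt_succ).
rewrite (@sum_pred1_indicator _ _ _ w0); first by case: (E v w0).
move=> w /=; apply/eqP/eqP => [sw|->]; last by rewrite sw0.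
by apply: (linext_inj Ls); apply: val_inj; rewrite sw0.
Qed.

Definition swap_slots (a b : 'I_#|T|) s : {ffun T -> 'I_#|T|} :=
  [ffun x => tperm a b (s x)].

(* [raise v s] moves [v] one slot up, [lower v s] one slot down; the
   [insubd] default only matters when [v] is already last, resp. first. *)
Definition raise v s := swap_slots (s v) (insubd (s v) (s v).+1) s.
Definition lower v s := swap_slots (insubd (s v) (s v).-1) (s v) s.

Lemma swap_slots_linext s (a b : 'I_#|T|) :
    s \in L -> val b = (val a).+1 ->
    (forall x y, pord E x y -> s x = a -> s y = b -> False) ->
  swap_slots a b s \in L.
Proof.
move=> Ls ab no_pab; rewrite inE; apply/andP; split.
  by apply/injectiveP => x y; rewrite !ffunE => /perm_inj /(linext_inj Ls).
apply/forallP => x; apply/forallP => y; apply/implyP => pxy; rewrite !ffunE.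
apply: tperm_succ_lt => //; first exact: linext_lt Ls pxy.
by apply/negP => /andP [/eqP/val_inj sxa /eqP/val_inj syb]; apply: (no_pab x y).
Qed.

Lemma raise_linext v s : s \in L -> outflow v s = 0 ->
  raise v s \in L /\ inflow v (raise v s) = 0.
Proof.
move=> Ls /eqP; rewrite /outflow addn_eq0 sum_nat_eq0 eqb0 => /andP [nlast /forallP no_up].
have lt_succ : (s v).+1 < #|T| by rewrite ltn_neqAle ltn_ord andbT.
rewrite /raise; set b := insubd _ _.
have vb : val b = (val (s v)).+1 by exact: val_insubd_succ.
split.
  apply: swap_slots_linext => // x y pxy /(linext_inj Ls) xv syb; subst x.
  have Evy : E v y by apply: (linext_succ_edge Ls pxy); rewrite syb vb.
  by move: (no_up y); rewrite Evy eqb0 syb vb eqxx.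
apply/eqP; rewrite /inflow ffunE tpermL addn_eq0 vb sum_nat_eq0 /=.
apply/forall_inP => u Euv; rewrite ffunE eqb0; apply/negP => /eqP su.
have sub : s u = b.
  by apply: (@perm_inj _ (tperm (s v) b)); rewrite tpermR; apply: val_inj; case: su.
by have := linext_lt Ls (edge_pord Euv); rewrite sub vb ltnNge leqnSn.
Qed.

Lemma lower_linext v s : s \in L -> inflow v s = 0 ->
  lower v s \in L /\ outflow v (lower v s) = 0.
Proof.
move=> Ls /eqP; rewrite /inflow addn_eq0 sum_nat_eq0 eqb0 => /andP [nfirst /forallP no_down].
rewrite /lower; set a := insubd _ _.
have va : val (s v) = (val a).+1 by rewrite val_insubd_pred ?prednK // lt0n.
split.
  apply: swap_slots_linext => // x y pxy sxa /(linext_inj Ls) yv; subst y.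
  have Exv : E x v by apply: (linext_succ_edge Ls pxy); rewrite sxa va.
  by move: (no_down x); rewrite Exv eqb0 sxa va eqxx.
apply/eqP; rewrite /outflow ffunE tpermR addn_eq0 sum_nat_eq0 eqb0 -va neq_ltn ltn_ord /=.
apply/forall_inP => w Evw; rewrite ffunE eqb0; apply/negP => /eqP sw.
have swa : s w = a.
  by apply: (@perm_inj _ (tperm a (s v))); rewrite tpermL; apply: val_inj; symmetry; exact: sw.
by have := linext_lt Ls (edge_pord Evw); rewrite swa va ltnNge leqnSn.
Qed.

Lemma raiseK v s : (s v).+1 < #|T| -> lower v (raise v s) = s.
Proof.
move=> lt_succ; rewrite /lower /raise; set b := insubd (s v) (s v).+1.
have vb : val b = (val (s v)).+1 by exact: val_insubd_succ.
rewrite /swap_slots ffunE tpermL.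
have -> : insubd b (val b).-1 = s v by apply: val_inj; rewrite val_insubd vb /= ltn_ord.
by apply/ffunP => x; rewrite !ffunE tpermK.
Qed.

Lemma lowerK v s : 0 < s v -> raise v (lower v s) = s.
Proof.
move=> sv_gt0; rewrite /lower /raise; set a := insubd (s v) (s v).-1.
have va : val (s v) = (val a).+1 by rewrite val_insubd_pred ?prednK.
rewrite /swap_slots ffunE tpermR.
have -> : insubd a (val a).+1 = s v by apply: val_inj; rewrite val_insubd -va ltn_ord.
by apply/ffunP => x; rewrite !ffunE tpermK.
Qed.

Lemma sum_inflow_outflow v :
  \sum_(s in L) inflow v s = \sum_(s in L) outflow v s.
Proof.
set X := [set s in L | inflow v s == 0]; set Y := [set s in L | outflow v s == 0].
have cardXY : #|X| = #|Y|.
  apply: (@card_in_inverse _ X Y (lower v) (raise v)) => s; rewrite inE => /andP [Ls /eqP s0].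
  - by rewrite inE; have [-> ->] := lower_linext Ls s0.
  - by rewrite inE; have [-> ->] := raise_linext Ls s0.
  - by apply: lowerK; move/eqP: s0; rewrite addn_eq0 eqb0 lt0n => /andP [].
  - by apply: raiseK; move/eqP: s0; rewrite addn_eq0 eqb0 ltn_neqAle ltn_ord andbT => /andP [].
apply/eqP; rewrite -(eqn_add2r #|X|) {2}cardXY.
by rewrite !sum_le1_card // => s; [apply: outflow_le1 | apply: inflow_le1].
Qed.

Lemma indeg0_first_slot v :
  (if indeg0 E v then #|[set s in L | s v == 0 :> nat]| else 0) =
  \sum_(s in L) (s v == 0 :> nat).
Proof.
case: ifP => [_|/negbT/forallPn [u /negPn Euv]]; first exact: card_set_sum.
by rewrite big1 // => s Ls; have := linext_lt Ls (edge_pord Euv); case: eqP => // ->.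
Qed.

Lemma outdeg0_last_slot v :
  (if outdeg0 E v then #|[set s in L | (s v).+1 == #|T|]| else 0) =
  \sum_(s in L) ((s v).+1 == #|T|).
Proof.
case: ifP => [_|/negbT/forallPn [w /negPn Evw]]; first exact: card_set_sum.
rewrite big1 // => s Ls; have svw := linext_lt Ls (edge_pord Evw).
by case: eqP => // sv_last; rewrite sv_last leqNgt ltn_ord in svw.
Qed.

Lemma sum_first_slot : 0 < #|T| -> \sum_v \sum_(s in L) (s v == 0 :> nat) = #|L|.
Proof.
move=> T_gt0; rewrite exchange_big /= -[RHS]sum1_card; apply: eq_bigr => s Ls.
have [v0 sv0] := linext_onto Ls (Ordinal T_gt0).
rewrite (@sum_pred1_indicator _ _ _ v0) // => v /=; apply/eqP/eqP => [sv|->]; last by rewrite sv0.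
by apply: (linext_inj Ls); apply: val_inj; rewrite sv0.
Qed.

Definition gcount (x y : hatV T) : nat :=
  match x, y with
  | Vx u, Vx v => #|[set s in L | (s u).+1 == s v]|
  | Vx v, Top => #|[set s in L | (s v).+1 == #|T|]|
  | Bot, Vx v => #|[set s in L | s v == 0 :> nat]|
  | _, _ => 0
  end.

Lemma gflowE (R : numDomainType) (x y : hatV T) : gflow R E x y = (gcount x y)%:R%R.
Proof. by case: x => [||u]; case: y => [||w]. Qed.

Lemma gcount_conservation v :
  \sum_(x | hatE E x (Vx v)) gcount x (Vx v) = \sum_(y | hatE E (Vx v) y) gcount (Vx v) y.
Proof.
rewrite big_mkcond big_hatV /= [RHS]big_mkcond big_hatV /=.
rewrite indeg0_first_slot outdeg0_last_slot !add0n -!big_mkcond /=.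
under [X in _ + X = _]eq_bigr => u _ do rewrite card_set_sum.
under [X in _ = _ + X]eq_bigr => w _ do rewrite card_set_sum.
rewrite (exchange_big _ _ _ (E^~ v)) (exchange_big _ _ _ (E v)) /= -!big_split /=.
exact: sum_inflow_outflow.
Qed.

Lemma gcount_source : 0 < #|T| -> \sum_(y | hatE E Bot y) gcount Bot y = #|L|.
Proof.
move=> T_gt0; rewrite big_mkcond big_hatV /= !add0n.
by under eq_bigr do rewrite indeg0_first_slot; apply: sum_first_slot.
Qed.

End LinearExtensions.

Local Open Scope ring_scope.

Theorem lemma3p9 (R : realFieldType) (T : finType) (E : rel T) :
  oriented_graph E ->
  natural_flow E (gflow R E) /\ net_flow E (gflow R E) = (num_linext E)%:R.
Proof.
case=> T_gt0 _ _ _ _; split; first split.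
- by move=> x y _; rewrite gflowE ler0n.
- move=> v; under eq_bigr do rewrite gflowE; under [RHS]eq_bigr do rewrite gflowE.
  by rewrite -!natr_sum gcount_conservation.
- rewrite /net_flow; under eq_bigr do rewrite gflowE.
  by rewrite -natr_sum gcount_source // big_pred0 ?subr0 // => -[].
Qed.
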